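(* Let $B=(b_{ij})$ be an $n\times n$ skew-symmetrizable integer matrix and let $D=\operatorname{diag}(d_1,\dots,d_n)$ be a skew-symmetrizer of $B$ (positive integers $d_i$ with $DB$ skew-symmetric), and put $\mathbf d=(d_1,\dots,d_n)$. Then for every $k\in\{1,\dots,n\}$ the weighted quivers $\mu_k(Q_B,\mathbf d)$ and $(Q_{\mu_k(B)},\mathbf d)$ are isomorphic (as weighted quivers on the vertex set $\{1,\dots,n\}$ with weight tuple $\mathbf d$).
   Context: A weighted quiver is a pair $(Q,\mathbf d)$ where $Q$ is a finite loop-free quiver on vertex set $Q_0$ (multiple arrows and 2-cycles allowed) and $\mathbf d=(d_i)_{i\in Q_0}$ is a tuple of positive integers. For $B$ and $D$ as in the claim, $Q_B$ is the quiver on vertex set $\{1,\dots,n\}$ having, for every pair $i,j$ with $c_{ij}\ge 0$, exactly $c_{ij}$ arrows from $j$ to $i$, where $c_{ij}=\gcd(d_i,d_j)b_{ij}/d_j$ (the matrix $(c_{ij})$ is a skew-symmetric integer matrix). Matrix mutation: $\mu_k(B)=B'$ with $b'_{ij}=-b_{ij}$ if $i=k$ or $j=k$, and $b'_{ij}=b_{ij}+\frac{b_{ik}|b_{kj}|+|b_{ik}|b_{kj}}{2}$ otherwise. Mutation of a weighted quiver $(Q,\mathbf d)$ at a vertex $k$: $\mu_k(Q,\mathbf d)$ has the same vertex set and weight tuple, and its quiver is obtained by (1) for each pair of arrows $j\to k$, $k\to i$, adding $\frac{\gcd(d_i,d_j)d_k}{\gcd(d_i,d_k)\gcd(d_k,d_j)}$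 new arrows from $j$ to $i$; (2) reversing every arrow incident to $k$; (3) choosing a maximal collection of pairwise disjoint oriented 2-cycles and deleting its arrows. *)

From HB Require Import structures.
From mathcomp Require Import all_boot all_order all_algebra.
Set Implicit Arguments. Unset Strict Implicit. Unset Printing Implicit Defensive.
Import Order.TTheory GRing.Theory Num.Theory.

(* A quiver on the vertex set 'I_n (= {1,..,n}) with multiple arrows, given up
   to isomorphism fixing the vertices, i.e. by its arrow counts:
   Q i j = number of arrows from i to j. *)
Definition quiver (n : nat) := 'I_n -> 'I_n -> nat.

Record wquiver (n : nat) := WQuiver { wq_quiver : quiver n; wq_weight : 'I_n -> nat }.

(* Isomorphism of weighted quivers on the vertex set 'I_n with the same weight
   tuple: identity on vertices, bijection on arrows (= equal arrow counts). *)
Definition wq_iso n (P Q : wquiver n) : Prop :=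
  (forall i, wq_weight P i = wq_weight Q i) /\
  (forall i j, wq_quiver P i j = wq_quiver Q i j).

Local Open Scope ring_scope.

Definition skew_symmetrizer n (B : 'M[int]_n) (d : 'I_n -> nat) : Prop :=
  (forall i, (0 < d i)%N) /\
  (forall i j, (d i)%:Z * B i j = - ((d j)%:Z * B j i)).

Definition mat_mut n (k : 'I_n) (B : 'M[int]_n) : 'M[int]_n :=
  \matrix_(i, j)
    if (i == k) || (j == k) then - B i j
    else B i j + ((B i k * `|B k j| + `|B i k| * B k j) %/ 2)%Z.

Definition cmat n (B : 'M[int]_n) (d : 'I_n -> nat) (i j : 'I_n) : int :=
  (((gcdn (d i) (d j))%:Z * B i j) %/ (d j)%:Z)%Z.

Definition quiver_of n (B : 'M[int]_n) (d : 'I_n -> nat) : quiver n :=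
  fun j i => if 0 <= cmat B d i j then absz (cmat B d i j) else 0%N.

Definition wq_mut n (k : 'I_n) (W : wquiver n) : wquiver n :=
  let Q := wq_quiver W in
  let d := wq_weight W in
  let Q1 : quiver n := fun j i =>
    (Q j i + Q j k * Q k i *
       (gcdn (d i) (d j) * d k %/ (gcdn (d i) (d k) * gcdn (d k) (d j))))%N in
  let Q2 : quiver n := fun i j =>
    if (i == k) || (j == k) then Q1 j i else Q1 i j in
  (* (3) delete a maximal collection of pairwise disjoint oriented 2-cycles:
         between i and j exactly min(#(i->j), #(j->i)) such cycles are removed *)
  let Q3 : quiver n := fun i j => (Q2 i j - minn (Q2 i j) (Q2 j i))%N in
  WQuiver Q3 d.

From HB Require Import structures.
From mathcomp Require Import all_boot all_order all_algebra.
From mathcomp Require Import ring lra zify.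
Set Implicit Arguments. Unset Strict Implicit. Unset Printing Implicit Defensive.
Import Order.TTheory GRing.Theory Num.Theory.

(* Both sides are compared through the *net arrow count* between two
   vertices: after step (3) of weighted-quiver mutation the number of arrows
   i -> j is the positive part [x]_+ of (#(i->j) - #(j->i)) taken after steps
   (1)-(2), and the number of arrows i -> j of Q_B is [c_ji]_+.  So it suffices
   to show that the net count of the mutated quiver equals c'_ji, the c-entry
   of mu_k(B).
   - A general lemma computes that net count for any weighted quiver without
     loop at k (wq_mut_arrows), using the factor F of step (1) (mut_factor).
   - For Q_B the net counts are the entries c_ji, and the quiver terms of
     step (1) combine into the "signed product" sprod x y = [x]_+[y]_+ -
     [-x]_+[-y]_+, which is also (x|y| + |x|y)/2, the term of matrix mutation.
   - The exactness d_j c_ij = gcd(d_i,d_j) b_ij, the homogeneity of sprod and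
     the identity F gcd(d_i,d_k) gcd(d_k,d_j) = gcd(d_i,d_j) d_k then match
     c'_ji with the net count. *)

(* The number F = gcd(d_i,d_j) d_k / (gcd(d_i,d_k) gcd(d_k,d_j)) of arrows
   j -> i added in step (1) for each path j -> k -> i. *)
Definition mut_factor (di dj dk : nat) : nat :=
  (gcdn di dj * dk %/ (gcdn di dk * gcdn dk dj))%N.

(* F is symmetric in i and j, so both orientations of step (1) agree. *)
Lemma mut_factorC (di dj dk : nat) : mut_factor di dj dk = mut_factor dj di dk.
Proof.
by rewrite /mut_factor (gcdnC dj di) (gcdnC dj dk) (gcdnC dk di) (mulnC (gcdn dk dj)).
Qed.

(* The divisibility that makes the quotient defining F exact. *)
Lemma gcd_prod_dvd (a b c : nat) : (gcdn a c * gcdn c b %| gcdn a b * c)%N.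
Proof.
have dvd_ac : (gcdn a c * gcdn c b %| a * c)%N.
  by rewrite dvdn_mul ?dvdn_gcdl.
have dvd_bc : (gcdn a c * gcdn c b %| b * c)%N.
  by rewrite mulnC dvdn_mul ?dvdn_gcdr.
by rewrite [X in (_ %| X)%N]muln_gcdl dvdn_gcd dvd_ac dvd_bc.
Qed.

Lemma mut_factorP (di dj dk : nat) :
  (mut_factor di dj dk * (gcdn di dk * gcdn dk dj) = gcdn di dj * dk)%N.
Proof. by rewrite /mut_factor divnK // gcd_prod_dvd. Qed.

Local Open Scope ring_scope.

Definition pospart (x : int) : int := if 0 <= x then x else 0.

Lemma pospart_ge0 (x : int) : 0 <= x -> pospart x = x.
Proof. by rewrite /pospart => ->. Qed.

Lemma pospart_le0 (x : int) : x <= 0 -> pospart x = 0.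
Proof. by rewrite /pospart; case: ifP => // x_ge0 x_le0; lia. Qed.

Lemma pospart_sub (x : int) : pospart x - pospart (- x) = x.
Proof.
case: (lerP 0 x) => hx.
  by rewrite pospart_ge0 // pospart_le0 ?oppr_le0 // subr0.
by rewrite pospart_le0 ?(ltW hx) // pospart_ge0 ?oppr_ge0 ?(ltW hx) // sub0r opprK.
Qed.

Lemma pospartZ (a x : int) : 0 <= a -> pospart (a * x) = a * pospart x.
Proof.
move=> a_ge0; case: (lerP 0 x) => hx.
  by rewrite !pospart_ge0 ?mulr_ge0.
by rewrite !pospart_le0 ?mulr0 ?(ltW hx) // mulr_ge0_le0 ?(ltW hx).
Qed.

Lemma sub_minnE (a b : nat) : ((a - minn a b)%N)%:Z = pospart (a%:Z - b%:Z).
Proof. by rewrite /pospart; case: ifP; lia. Qed.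

Definition sprod (x y : int) : int :=
  pospart x * pospart y - pospart (- x) * pospart (- y).

Lemma sprodC (x y : int) : sprod x y = sprod y x.
Proof. by rewrite /sprod mulrC [pospart (- y) * _]mulrC. Qed.

Lemma sprodZ (a b x y : int) : 0 <= a -> 0 <= b ->
  sprod (a * x) (b * y) = a * b * sprod x y.
Proof.
move=> a_ge0 b_ge0.
by rewrite /sprod -!mulrN !pospartZ //; ring.
Qed.

Lemma sprod_half (x y : int) : ((x * `|y| + `|x| * y) %/ 2)%Z = sprod x y.
Proof.
rewrite /sprod.
case: (lerP 0 x) => hx; case: (lerP 0 y) => hy.
- have [nx ny] : - x <= 0 /\ - y <= 0 by rewrite !oppr_le0.
  rewrite (ger0_norm hx) (ger0_norm hy) (pospart_ge0 hx) (pospart_ge0 hy).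
  rewrite (pospart_le0 nx) (pospart_le0 ny).
  rewrite (_ : _ + _ = (x * y) * 2) ?mulzK //; ring.
- have nx : - x <= 0 by rewrite oppr_le0.
  rewrite (ger0_norm hx) (ltr0_norm hy) (pospart_ge0 hx) (pospart_le0 (ltW hy)).
  rewrite (pospart_le0 nx) (_ : _ + _ = 0) ?div0z; ring.
- have ny : - y <= 0 by rewrite oppr_le0.
  rewrite (ltr0_norm hx) (ger0_norm hy) (pospart_le0 (ltW hx)) (pospart_le0 ny).
  rewrite (_ : _ + _ = 0) ?div0z; ring.
- have [nx ny] : 0 <= - x /\ 0 <= - y by rewrite !oppr_ge0 !ltW.
  rewrite (ltr0_norm hx) (ltr0_norm hy) (pospart_le0 (ltW hx)) (pospart_le0 (ltW hy)).
  rewrite (pospart_ge0 nx) (pospart_ge0 ny).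
  rewrite (_ : _ + _ = (- (x * y)) * 2) ?mulzK //; ring.
Qed.

(* Net number of arrows i -> j of the quiver obtained from W after steps (1)
   and (2) of the mutation at k (before cancelling 2-cycles). *)
Definition mut_balance n (k : 'I_n) (W : wquiver n) (i j : 'I_n) : int :=
  let Q := wq_quiver W in
  let d := wq_weight W in
  if (i == k) || (j == k) then (Q j i)%:Z - (Q i j)%:Z
  else (Q i j)%:Z - (Q j i)%:Z
       + (mut_factor (d i) (d j) (d k))%:Z * ((Q i k * Q k j)%:Z - (Q j k * Q k i)%:Z).

Lemma wq_mut_arrows n (k : 'I_n) (W : wquiver n) (i j : 'I_n) :
  wq_quiver W k k = 0%N ->
  (wq_quiver (wq_mut k W) i j)%:Z = pospart (mut_balance k W i j).
Proof.
move=> no_loop; rewrite /= sub_minnE /mut_balance orbC.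
case: ifP => [incident | /negbT not_incident]; congr pospart.
  by case/orP: incident => /eqP ->; rewrite no_loop ?muln0 ?mul0n ?addn0.
have F_sym := mut_factorC (wq_weight W j) (wq_weight W i) (wq_weight W k).
rewrite /mut_factor in F_sym; rewrite F_sym !PoszD !PoszM; ring.
Qed.

Lemma quiver_ofE n (B : 'M[int]_n) (d : 'I_n -> nat) (i j : 'I_n) :
  (quiver_of B d i j)%:Z = pospart (cmat B d j i).
Proof. by rewrite /quiver_of /pospart; case: ifP => // c_ge0; rewrite gez0_abs. Qed.

Section QuiverOfMatrix.

Variables (n : nat) (B : 'M[int]_n) (d : 'I_n -> nat).
Hypothesis hD : skew_symmetrizer B d.

Local Notation c := (cmat B d).

Lemma weight_neq0 (i : 'I_n) : (d i)%:Z != 0.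
Proof. by case: hD => d_gt0 _; rewrite eqz_nat -lt0n d_gt0. Qed.

Lemma cmat_exact (i j : 'I_n) : (d j)%:Z * c i j = (gcdn (d i) (d j))%:Z * B i j.
Proof.
rewrite /cmat mulrC divzK // /dvdz unfold_in /= abszM !absz_nat.
have dvd_di_bij : (d j %| d i * absz (B i j))%N.
  case: hD => _ skew; have := congr1 absz (skew i j).
  by rewrite abszN !abszM !absz_nat => ->; apply: dvdn_mulr.
by rewrite muln_gcdl dvdn_gcd dvd_di_bij dvdn_mulr.
Qed.

Lemma cmat_skew (i j : 'I_n) : c j i = - c i j.
Proof.
apply: (mulIf (mulf_neq0 (weight_neq0 i) (weight_neq0 j))).
case: hD => _ skew.
have -> : c j i * ((d i)%:Z * (d j)%:Z) = (d j)%:Z * ((d i)%:Z * c j i) by ring.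
have -> : - c i j * ((d i)%:Z * (d j)%:Z) = - ((d i)%:Z * ((d j)%:Z * c i j)) by ring.
rewrite !cmat_exact gcdnC.
have -> : (d i)%:Z * ((gcdn (d i) (d j))%:Z * B i j)
          = (gcdn (d i) (d j))%:Z * ((d i)%:Z * B i j) by ring.
rewrite skew; ring.
Qed.

Lemma quiver_of_loop (k : 'I_n) : quiver_of B d k k = 0%N.
Proof.
have c_kk : c k k = 0 by have := cmat_skew k k; lra.
by rewrite /quiver_of c_kk.
Qed.

Lemma quiver_of_balance (i j : 'I_n) :
  (quiver_of B d i j)%:Z - (quiver_of B d j i)%:Z = c j i.
Proof. by rewrite !quiver_ofE (cmat_skew j i) pospart_sub. Qed.

Lemma cmat_mut_incident (k i j : 'I_n) : (i == k) || (j == k) ->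
  cmat (mat_mut k B) d j i = - c j i.
Proof.
move=> incident; rewrite {1}/cmat mxE (orbC (j == k)) incident mulrN.
rewrite -(cmat_exact j i).
by rewrite -mulrN mulKz ?weight_neq0.
Qed.

Lemma sprod_cmat (k i j : 'I_n) :
  (d i)%:Z * ((mut_factor (d i) (d j) (d k))%:Z * sprod (c k i) (c j k))
  = (gcdn (d j) (d i))%:Z * sprod (B k i) (B j k).
Proof.
apply: (mulIf (weight_neq0 k)).
have F_spec : (mut_factor (d i) (d j) (d k))%:Z
                * ((gcdn (d k) (d i))%:Z * (gcdn (d j) (d k))%:Z)
              = (gcdn (d j) (d i))%:Z * (d k)%:Z.
  rewrite -!PoszM (gcdnC (d k) (d i)) (gcdnC (d j) (d k)) (gcdnC (d j) (d i)).
  by rewrite mut_factorP.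
transitivity ((mut_factor (d i) (d j) (d k))%:Z
                * sprod ((d i)%:Z * c k i) ((d k)%:Z * c j k)).
  by rewrite sprodZ //; ring.
by rewrite !cmat_exact sprodZ // mulrA F_spec; ring.
Qed.

Lemma cmat_mut_generic (k i j : 'I_n) : ~~ ((i == k) || (j == k)) ->
  cmat (mat_mut k B) d j i
  = c j i + (mut_factor (d i) (d j) (d k))%:Z * sprod (c k i) (c j k).
Proof.
move=> not_incident.
rewrite {1}/cmat mxE (orbC (j == k)) (negbTE not_incident) sprod_half sprodC.
by rewrite mulrDr -sprod_cmat -(cmat_exact j i) -mulrDr mulKz ?weight_neq0.
Qed.

Lemma mut_balance_quiver_of (k i j : 'I_n) :
  mut_balance k (WQuiver (quiver_of B d) d) i j = cmat (mat_mut k B) d j i.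
Proof.
rewrite /mut_balance /=; case: ifP => [incident | /negbT not_incident].
  by rewrite cmat_mut_incident // -quiver_of_balance opprB.
rewrite cmat_mut_generic // quiver_of_balance !PoszM !quiver_ofE.
by rewrite (cmat_skew j k) (cmat_skew k i) /sprod [pospart (- _) * _]mulrC.
Qed.

End QuiverOfMatrix.

Theorem mainTheorem1 (n : nat) (B : 'M[int]_n) (d : 'I_n -> nat)
  (hD : skew_symmetrizer B d) (k : 'I_n) :
  wq_iso (wq_mut k (WQuiver (quiver_of B d) d))
         (WQuiver (quiver_of (mat_mut k B) d) d).
Proof.
split=> // i j; apply/eqP; rewrite -eqz_nat; apply/eqP.
rewrite wq_mut_arrows; last exact: quiver_of_loop.
by rewrite quiver_ofE mut_balance_quiver_of.
Qed.
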